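(* Let $K_{n_1,n_2}$ be the complete bipartite graph with parts $V_1,V_2$, where $n_1=|V_1|\ge 2$ and $n_2=|V_2|\ge 2$. Then the clique number of the 1-skeleton of its cut polytope satisfies $$\omega(\mathrm{CUT}(K_{n_1,n_2}))\ge 2^{\min\{n_1,n_2\}-1}.$$
   Context: For an undirected graph $G=(V,E)$ and $S\subseteq V$, $\delta(S)\subseteq E$ denotes the set of edges with exactly one endpoint in $S$, and $\mathbf v(S)\in\{0,1\}^{E}$ is its incidence vector ($v(S)_e=1$ iff $e\in\delta(S)$). The cut polytope is $\mathrm{CUT}(G)=\operatorname{conv}\{\mathbf v(S):S\subseteq V\}\subset\mathbb R^{E}$. The 1-skeleton of a polytope is the graph whose vertices are the polytope's vertices and whose edges are its one-dimensional faces; $\omega$ denotes its clique number. *)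

From HB Require Import structures.
From mathcomp Require Import all_boot all_order all_algebra.
From mathcomp Require Import reals.
Set Implicit Arguments. Unset Strict Implicit. Unset Printing Implicit Defensive.
Import Order.TTheory GRing.Theory Num.Theory.
Local Open Scope ring_scope.

Definition dotv (R : realType) (E : finType) (c x : {ffun E -> R}) : R :=
  \sum_(e : E) c e * x e.

Definition in_segment (R : realType) (E : finType) (u v p : {ffun E -> R}) : Prop :=
  exists t : R, 0 <= t /\ t <= 1 /\ forall e, p e = t * u e + (1 - t) * v e.

Definition is_vertex (R : realType) (E : finType) (P : {ffun E -> R} -> Prop)
    (p : {ffun E -> R}) : Prop :=
  P p /\ exists c : {ffun E -> R},
    forall q, P q -> dotv c q <= dotv c p /\ (dotv c q = dotv c p -> q = p).

(* u v span a 1-dimensional face (edge) of conv(P): some linear functional c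
   is maximized over P exactly on points of the segment [u,v] (including u,v);
   the face conv(P ∩ argmax c) is then the segment [u,v], with u <> v. *)
Definition skel_adj (R : realType) (E : finType) (P : {ffun E -> R} -> Prop)
    (u v : {ffun E -> R}) : Prop :=
  is_vertex P u /\ is_vertex P v /\ u <> v /\
  exists c : {ffun E -> R}, dotv c u = dotv c v /\
    forall q, P q -> dotv c q <= dotv c u /\ (dotv c q = dotv c u -> in_segment u v q).

Definition skel_clique (R : realType) (E : finType) (P : {ffun E -> R} -> Prop)
    (Q : seq {ffun E -> R}) : Prop :=
  uniq Q /\ (forall q, q \in Q -> is_vertex P q) /\
  (forall u v, u \in Q -> v \in Q -> u <> v -> skel_adj P u v).

(* Complete bipartite graph K_{n1,n2}: vertex set 'I_n1 + 'I_n2 (V1 = inl, V2 = inr),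
   edge set 'I_n1 * 'I_n2, edge (i,j) joining inl i and inr j. *)
Definition Kvert (n1 n2 : nat) := ('I_n1 + 'I_n2)%type.
Definition Kedge (n1 n2 : nat) := ('I_n1 * 'I_n2)%type.

Definition cutvec (R : realType) (n1 n2 : nat) (S : {set Kvert n1 n2}) :
    {ffun Kedge n1 n2 -> R} :=
  [ffun e : Kedge n1 n2 =>
     if (inl e.1 \in S) != (inr e.2 \in S) then (1 : R) else 0].

Definition cutpts (R : realType) (n1 n2 : nat) (x : {ffun Kedge n1 n2 -> R}) : Prop :=
  exists S : {set Kvert n1 n2}, x = cutvec R S.

From HB Require Import structures.
From mathcomp Require Import all_boot all_order all_algebra.
From mathcomp Require Import reals.
From mathcomp Require Import lra zify.
Set Implicit Arguments. Unset Strict Implicit. Unset Printing Implicit Defensive.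
Import Order.TTheory GRing.Theory Num.Theory.
Local Open Scope ring_scope.

(* The cut vector v(S) is the unique maximiser over CUT of the functional that
   weighs the edges of delta(S) by +1 and the others by -1, so it is a vertex.
   If D = S Δ T contains a vertex of each side of K_{n1,n2} and misses a vertex
   of each side, keep only the weights of the edges that do not cross D. A
   maximiser X must then agree with S on those edges, i.e. X Δ S is constant
   along them; the edges inside D and those inside its complement form two
   connected complete bipartite graphs, so X Δ S is constant on D and on its
   complement, whence v(X) is v(S) or v(T): the segment [v(S), v(T)] is a face.
   Taking k = min(n1, n2) - 1 and, for b in {0,1}^k, the set S_b of the
   vertices of index p+1 (on both sides) with b_p = 1, any two S_b differ on a
   pair of vertices of index p+1 and both miss the vertices of index 0, which
   gives a clique of size 2^k. *)

Lemma in_segment_left (R : realType) (E : finType) (u v : {ffun E -> R}) :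
  in_segment u v u.
Proof. by exists 1; do 2?split; [lra | lra | move=> e; rewrite subrr; lra]. Qed.

Lemma in_segment_right (R : realType) (E : finType) (u v : {ffun E -> R}) :
  in_segment u v v.
Proof. by exists 0; do 2?split; [lra | lra | move=> e; rewrite subr0; lra]. Qed.

Section CutPolytopeKn1n2.
Variables (R : realType) (n1 n2 : nat).
Implicit Types (S T X : {set Kvert n1 n2}) (e : Kedge n1 n2).

Definition crosses S e : bool := (inl e.1 \in S) != (inr e.2 \in S).

Lemma cutvecE S e : cutvec R S e = if crosses S e then 1 else 0.
Proof. by rewrite ffunE. Qed.

Lemma eq_cutvec S T :
  cutvec R S = cutvec R T <-> forall e, crosses S e = crosses T e.
Proof.
split=> [/ffunP eqST e | eqST]; last by apply/ffunP => e; rewrite !cutvecE eqST.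
have := eqST e; rewrite !cutvecE.
by case: (crosses S e); case: (crosses T e) => // /eqP; rewrite ?oner_eq0 // eq_sym oner_eq0.
Qed.

Definition signed_weight S (w : pred (Kedge n1 n2)) : {ffun Kedge n1 n2 -> R} :=
  [ffun e => if w e then (if crosses S e then 1 else -1) else 0].

Lemma dotv_signed_weight S w X :
  dotv (signed_weight S w) (cutvec R S) - dotv (signed_weight S w) (cutvec R X) =
  #|[pred e | w e && (crosses X e != crosses S e)]|%:R.
Proof.
rewrite /dotv -sumrB -sumr_const [RHS]big_mkcond /=; apply: eq_bigr => e _.
rewrite !cutvecE ffunE inE.
by case: (w e); case: (crosses S e); case: (crosses X e) => /=; lra.
Qed.

Lemma dotv_signed_weight_le S w X :
  dotv (signed_weight S w) (cutvec R X) <= dotv (signed_weight S w) (cutvec R S).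
Proof. by rewrite -subr_ge0 dotv_signed_weight ler0n. Qed.

Lemma dotv_signed_weight_eq S w X :
  dotv (signed_weight S w) (cutvec R X) = dotv (signed_weight S w) (cutvec R S) ->
  forall e, w e -> crosses X e = crosses S e.
Proof.
move=> eqXS e we; apply/(@eqP _ (crosses X e)); apply: contraT => neqXS.
have /esym/eqP := dotv_signed_weight S w X; rewrite eqXS subrr pnatr_eq0.
by move=> /eqP/card0_eq/(_ e); rewrite !inE we neqXS.
Qed.

Lemma cutvec_vertex S : is_vertex (@cutpts R n1 n2) (cutvec R S).
Proof.
split; first by exists S.
exists (signed_weight S predT) => _ [X ->].
split=> [|/dotv_signed_weight_eq eqXS]; first exact: dotv_signed_weight_le.
by apply/eq_cutvec => e; rewrite eqXS.
Qed.

Lemma edge_invariant_two_valued (A : Type) (D : Kvert n1 n2 -> bool)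
    (f : Kvert n1 n2 -> A) i0 j0 i1 j1 :
  ~~ D (inl i0) -> ~~ D (inr j0) -> D (inl i1) -> D (inr j1) ->
  (forall i j, D (inl i) = D (inr j) -> f (inl i) = f (inr j)) ->
  exists a b, forall x, f x = if D x then b else a.
Proof.
move=> /negbTE Di0 /negbTE Dj0 Di1 Dj1 edge.
exists (f (inl i0)), (f (inl i1)) => -[i | j].
  case Di: (D (inl i)).
    by rewrite (edge i j1) ?(edge i1 j1) ?Di ?Di1.
  by rewrite (edge i j0) ?(edge i0 j0) ?Di ?Di0.
case Dj: (D (inr j)); first by rewrite (edge i1 j) ?Dj.
by rewrite (edge i0 j) ?Dj.
Qed.

Lemma cutvec_adj S T i0 j0 i1 j1 :
  (inl i0 \in S) = (inl i0 \in T) -> (inr j0 \in S) = (inr j0 \in T) ->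
  (inl i1 \in S) != (inl i1 \in T) -> (inr j1 \in S) != (inr j1 \in T) ->
  skel_adj (@cutpts R n1 n2) (cutvec R S) (cutvec R T).
Proof.
move=> Si0 Sj0 Si1 Sj1.
pose w e := crosses S e == crosses T e.
have neqST : cutvec R S <> cutvec R T.
  move/eq_cutvec/(_ (i0, j1)); rewrite /crosses /= Si0.
  by move: Sj1; case: (inr j1 \in S); case: (inr j1 \in T); case: (inl i0 \in T).
split; [exact: cutvec_vertex | split; [exact: cutvec_vertex | split=> //]].
exists (signed_weight S w); split.
  rewrite /dotv; apply: eq_bigr => e _; rewrite !cutvecE ffunE /w.
  by case: eqP => [->|]; rewrite ?mul0r.
move=> _ [X ->]; split=> [|/dotv_signed_weight_eq agree]; first exact: dotv_signed_weight_le.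
pose D x := (x \in S) != (x \in T).
pose flip x := (x \in X) != (x \in S).
have [|||||a [b flipE]] := @edge_invariant_two_valued _ D flip i0 j0 i1 j1.
- by rewrite /D Si0 eqxx.
- by rewrite /D Sj0 eqxx.
- exact: Si1.
- exact: Sj1.
- move=> i j; have := agree (i, j); rewrite /w /crosses /D /flip /=.
  by case: (inl i \in X); case: (inl i \in S); case: (inl i \in T);
     case: (inr j \in X); case: (inr j \in S); case: (inr j \in T) => // ->.
have crossesX e : crosses X e = crosses S e (+) (a != b) && (D (inl e.1) != D (inr e.2)).
  case: e => i j; move: (flipE (inl i)) (flipE (inr j)); rewrite /crosses /D /flip /=.
  case: a b flipE => [] [] _;
  by case: (inl i \in X); case: (inl i \in S); case: (inl i \in T);
     case: (inr j \in X); case: (inr j \in S); case: (inr j \in T).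
have [ab | ab] := eqVneq a b.
  have -> : cutvec R X = cutvec R S.
    by apply/eq_cutvec => e; rewrite crossesX ab eqxx addbF.
  exact: in_segment_left.
have -> : cutvec R X = cutvec R T.
  apply/eq_cutvec => -[i j]; rewrite crossesX ab /D /crosses /=.
  by case: (inl i \in S); case: (inl i \in T); case: (inr j \in S); case: (inr j \in T).
exact: in_segment_right.
Qed.

End CutPolytopeKn1n2.

Section BitCuts.
Variables (R : realType) (n1 n2 k : nat).
Hypotheses (k_lt_n1 : (k < n1)%N) (k_lt_n2 : (k < n2)%N).

Definition vertex_index (x : Kvert n1 n2) : nat :=
  match x with inl i => val i | inr j => val j end.

Definition bits_set (b : {ffun 'I_k -> bool}) : {set Kvert n1 n2} :=
  [set x | [exists p : 'I_k, (vertex_index x == p.+1) && b p]].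

Lemma mem_bits_set0 b x : vertex_index x = 0%N -> (x \in bits_set b) = false.
Proof. by rewrite inE => x0; apply/existsP => -[p /andP[/eqP]]; rewrite x0. Qed.

Lemma mem_bits_setS b x (p : 'I_k) : vertex_index x = p.+1 -> (x \in bits_set b) = b p.
Proof.
rewrite inE => xp; apply/existsP/idP => [[q /andP[/eqP xq bq]] | bp].
  by have -> : p = q by apply: val_inj; apply: succn_inj; rewrite -xp -xq.
by exists p; rewrite xp eqxx.
Qed.

Let zero1 : 'I_n1 := Ordinal (leq_ltn_trans (leq0n k) k_lt_n1).
Let zero2 : 'I_n2 := Ordinal (leq_ltn_trans (leq0n k) k_lt_n2).
Let succ1 (p : 'I_k) : 'I_n1 := Ordinal (leq_ltn_trans (ltn_ord p) k_lt_n1).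
Let succ2 (p : 'I_k) : 'I_n2 := Ordinal (leq_ltn_trans (ltn_ord p) k_lt_n2).

Lemma bits_cutvec_inj : injective (fun b => cutvec R (bits_set b)).
Proof.
move=> b b' /eq_cutvec /(_ (zero1, succ2 _)) eqbb'; apply/ffunP => p.
move: (eqbb' p); rewrite /crosses /= !(@mem_bits_set0 _ (inl _)) //.
rewrite !(@mem_bits_setS _ (inr _) p) //.
by case: (b p); case: (b' p).
Qed.

Lemma bits_cutvec_adj b b' : b != b' ->
  skel_adj (@cutpts R n1 n2) (cutvec R (bits_set b)) (cutvec R (bits_set b')).
Proof.
move=> neqbb'; have [p bp] : exists p, b p != b' p.
  apply/existsP; rewrite -negb_forall; apply: contra neqbb' => /forallP eqbb'.
  by apply/eqP/ffunP => p; apply/eqP.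
apply: (@cutvec_adj R n1 n2 _ _ zero1 zero2 (succ1 p) (succ2 p)).
- by rewrite !mem_bits_set0.
- by rewrite !mem_bits_set0.
- by rewrite !(@mem_bits_setS _ (inl _) p).
- by rewrite !(@mem_bits_setS _ (inr _) p).
Qed.

Lemma bits_cutvec_clique :
  skel_clique (@cutpts R n1 n2) [seq cutvec R (bits_set b) | b : {ffun 'I_k -> bool}].
Proof.
split; first by rewrite map_inj_uniq ?enum_uniq //; exact: bits_cutvec_inj.
split; first by move=> _ /mapP[b _ ->]; exact: cutvec_vertex.
move=> _ _ /mapP[b _ ->] /mapP[b' _ ->] neq; apply: bits_cutvec_adj.
by apply: contra_not_neq neq => ->.
Qed.

End BitCuts.

Theorem theorem9 (R : realType) (n1 n2 : nat) :
  (2 <= n1)%N -> (2 <= n2)%N ->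
  exists Q : seq {ffun Kedge n1 n2 -> R},
    skel_clique (@cutpts R n1 n2) Q /\ size Q = (2 ^ (minn n1 n2).-1)%N.
Proof.
move=> n1_ge2 n2_ge2.
have k_lt_n1 : ((minn n1 n2).-1 < n1)%N by lia.
have k_lt_n2 : ((minn n1 n2).-1 < n2)%N by lia.
exists [seq cutvec R (bits_set n1 n2 b) | b : {ffun 'I_(minn n1 n2).-1 -> bool}].
split; first exact: bits_cutvec_clique.
by rewrite size_image card_ffun card_bool card_ord.
Qed.
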